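(* Let $X$ be a convex metric space over a Boolean ring $B$, $0\in X$, and let $\{x_{1},\dots,x_{n}\}$ be a base of $(X,0)$. Then for every integer $k\ge1$ the ideal $I_k(X)$ is principal, $\alpha_{k}(X)=|x_{k}|$ for $k\le n$, and $\alpha_{k}(X)=0$ for $k>n$.
   Context: $B$ is a Boolean ring ($a\vee b=a+b+ab$, $a\le b\iff ab=a$; $a_1\oplus\cdots\oplus a_n$ denotes a sum of pairwise disjoint elements). A Boolean metric space over $B$: set $X$ with $d:X\times X\to B$, $d(x,y)=0\iff x=y$, symmetric, $d(x,z)\le d(x,y)\vee d(y,z)$. For $x_1,\dots,x_n\in X$, $a_i\in B$ with $a_1\oplus\cdots\oplus a_n=1$, $x$ is a convex combination of the $x_i$ with coefficients $a_i$ if $a_id(x,x_i)=0$ for all $i$; $X$ is convex if all such combinations exist. In $(X,0)$: $|x|=d(0,x)$; $x\perp y$ iff $d(x,y)=|x|\vee|y|$; a finite $R\subseteq X$ is orthogonal if $0\notin R$ and distinct elements are orthogonal; a referential is an orthogonal $R$ such that every element of $X$ is a convex combination of elements of $R\cup\{0\}$; a base is a referential $\{x_1,\dots,x_n\}$ with $|x_1|\ge\cdots\ge|x_n|$. For integer $k>0$, $I_k(X)$ is the ideal of $B$ generated by $\{\prod_{0\le i<j\le k}d(u_i,u_j): u_0,\dots,u_k\in X\}$, and when principal, $\alpha_k(X)$ is its generator. *)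

From HB Require Import structures.
From mathcomp Require Import all_boot all_order all_algebra.
Set Implicit Arguments. Unset Strict Implicit. Unset Printing Implicit Defensive.
Import GRing.Theory.
Local Open Scope ring_scope.

Section BoolMetric.
Variable B : comPzRingType.

Definition bjoin (a b : B) : B := a + b + a * b.
Definition ble (a b : B) : Prop := a * b = a.

Definition is_partition (n : nat) (a : 'I_n -> B) : Prop :=
  (forall i j : 'I_n, i != j -> a i * a j = 0) /\ \sum_(i < n) a i = 1.

Variable X : Type.
Variable d : X -> X -> B.

Definition is_bool_metric : Prop :=
  (forall x y, d x y = 0 <-> x = y) /\
  (forall x y, d x y = d y x) /\
  (forall x y z, ble (d x z) (bjoin (d x y) (d y z))).

Definition is_conv_comb (x : X) (n : nat) (xs : 'I_n -> X) (a : 'I_n -> B) : Prop :=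
  forall i, a i * d x (xs i) = 0.

Definition is_convex : Prop :=
  forall (n : nat) (xs : 'I_n -> X) (a : 'I_n -> B),
    is_partition a -> exists x, is_conv_comb x xs a.

Variable o : X.

Definition bnorm (x : X) : B := d o x.

Definition borth (x y : X) : Prop := d x y = bjoin (bnorm x) (bnorm y).

(* the finite set R = {xs 0, ..., xs (n-1)} (xs injective, so |R| = n) is orthogonal *)
Definition is_orthogonal (n : nat) (xs : 'I_n -> X) : Prop :=
  (forall i j, xs i = xs j -> i = j) /\
  (forall i, xs i <> o) /\
  (forall i j, i != j -> borth (xs i) (xs j)).

Definition is_referential (n : nat) (xs : 'I_n -> X) : Prop :=
  is_orthogonal xs /\
  forall x : X, exists (m : nat) (ys : 'I_m -> X) (a : 'I_m -> B),
    (forall l, (exists i, ys l = xs i) \/ ys l = o) /\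
    is_partition a /\ is_conv_comb x ys a.

(* base {x_1,...,x_n} with |x_1| >= ... >= |x_n|; here x_{i+1} = xs i *)
Definition is_base (n : nat) (xs : 'I_n -> X) : Prop :=
  is_referential xs /\
  forall i j : 'I_n, (i <= j)%N -> ble (bnorm (xs j)) (bnorm (xs i)).

Definition Ik_gen (k : nat) (c : B) : Prop :=
  exists u : 'I_k.+1 -> X,
    c = \prod_(i < k.+1) \prod_(j < k.+1 | (i < j)%N) d (u i) (u j).

End BoolMetric.

Definition in_gen_ideal (B : comPzRingType) (S : B -> Prop) (c : B) : Prop :=
  exists (m : nat) (r s : 'I_m -> B),
    (forall l, S (s l)) /\ c = \sum_(l < m) r l * s l.

Definition is_generator (B : comPzRingType) (I : B -> Prop) (g : B) : Prop :=
  forall c, I c <-> exists r, c = g * r.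

Definition is_principal (B : comPzRingType) (I : B -> Prop) : Prop :=
  exists g, is_generator I g.

From mathcomp Require Import all_boot all_order all_algebra zify.
Import GRing.Theory.
Local Open Scope ring_scope.
Set Implicit Arguments. Unset Strict Implicit. Unset Printing Implicit Defensive.

(* Let {x_1,...,x_n} be a base of (X,0) and k >= 1.  Write g = |x_k| if k <= n
   and g = 0 otherwise.  The generators of I_k are the products
   P(u) = prod_{i<j} d(u_i,u_j) over (k+1)-tuples u, and we show
     (a) P(u) <= g for every u (upper bound), and
     (b) g = P(0, x_1, ..., x_k) when k <= n (witness),
   so that g generates I_k.  For (a), the referential property lets us
   split B into regions where every u_i coincides with a point y_i of
   R u {0}; on such a region d(u_i,u_j) <= d(y_i,y_j).  Either two y_i are
   equal, or, by pigeonhole, two distinct y_i lie in {0, x_k, ..., x_n},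
   and distinct points there are at distance <= g by orthogonality. *)

Section BooleanRing.
Variable B : comPzRingType.
Hypothesis Bbool : forall a : B, a * a = a.

Lemma addrr_bool (a : B) : a + a = 0.
Proof.
have H := Bbool (a + a).
rewrite mulrDl !mulrDr !Bbool in H.
by have := congr1 (fun z => z - (a + a)) H; rewrite /= addrK subrr.
Qed.

Lemma ble_compl (a g : B) : ble a g <-> a * (1 - g) = 0.
Proof.
rewrite /ble mulrBr mulr1; split=> [->|/eqP]; first exact: subrr.
by rewrite subr_eq0 => /eqP <-.
Qed.

Lemma ble_trans (a b c : B) : ble a b -> ble b c -> ble a c.
Proof. by rewrite /ble => Hab Hbc; rewrite -Hab -mulrA Hbc. Qed.

Lemma ble_antisym (a b : B) : ble a b -> ble b a -> a = b.
Proof. by rewrite /ble => Hab Hba; rewrite -Hab mulrC Hba. Qed.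

Lemma ble0 (a : B) : ble 0 a.
Proof. exact: mul0r. Qed.

Lemma ble_mulr (a b : B) : ble (a * b) a.
Proof. by rewrite /ble mulrAC Bbool. Qed.

Lemma ble_meet (a b c : B) : ble a b -> ble a c -> ble a (b * c).
Proof. by rewrite /ble => Hab Hac; rewrite mulrA Hab Hac. Qed.

Lemma bjoinC (a b : B) : bjoin a b = bjoin b a.
Proof. by rewrite /bjoin (addrC a) mulrC. Qed.

Lemma bjoin0r (a : B) : bjoin a 0 = a.
Proof. by rewrite /bjoin mulr0 !addr0. Qed.

Lemma bjoin_lub (a b g : B) : ble a g -> ble b g -> ble (bjoin a b) g.
Proof. by rewrite /ble /bjoin => Ha Hb; rewrite !mulrDl -mulrA Hb Ha. Qed.

Lemma bjoin_ubr (a b : B) : ble b (bjoin a b).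
Proof.
rewrite /ble /bjoin !mulrDr Bbool mulrCA Bbool (mulrC b a).
by rewrite addrAC addrr_bool add0r.
Qed.

Lemma ble_mask (a b c f : B) : ble c (bjoin a b) -> f * a = 0 -> ble (f * c) b.
Proof.
rewrite /ble /bjoin => Hc Hf; rewrite -{2}Hc !mulrDr !mulrA.
have -> : f * c * a = 0 by rewrite mulrAC Hf mul0r.
by rewrite mul0r add0r addr0.
Qed.

End BooleanRing.

Section BooleanMetric.
Variable B : comPzRingType.
Hypothesis Bbool : forall a : B, a * a = a.
Variables (X : Type) (d : X -> X -> B).
Hypothesis Hm : is_bool_metric d.

Lemma dxx (x : X) : d x x = 0. Proof. exact/(proj1 Hm). Qed.
Lemma dsym (x y : X) : d x y = d y x. Proof. exact: (proj1 (proj2 Hm)). Qed.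
Lemma dtri (x y z : X) : ble (d x z) (bjoin (d x y) (d y z)).
Proof. exact: (proj2 (proj2 Hm)). Qed.

Lemma dist_mask (F : B) (x1 x2 y1 y2 : X) :
  F * d x1 y1 = 0 -> F * d x2 y2 = 0 -> ble (F * d x1 x2) (d y1 y2).
Proof.
move=> H1 H2.
have to_y1 : ble (F * d x1 x2) (d y1 x2) := ble_mask (dtri x1 y1 x2) H1.
have to_y2 : ble (F * d y1 x2) (d y1 y2).
  by apply: (ble_mask (a := d y2 x2)); [rewrite bjoinC; exact: dtri | rewrite dsym].
apply: (ble_trans _ to_y2); apply: ble_meet to_y1; exact: ble_mulr.
Qed.

Definition pair_prod (k : nat) (u : 'I_k.+1 -> X) : B :=
  \prod_(i < k.+1) \prod_(j < k.+1 | (i < j)%N) d (u i) (u j).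

Lemma pair_prod_le (k : nat) (u : 'I_k.+1 -> X) (a b : 'I_k.+1) :
  a != b -> ble (pair_prod u) (d (u a) (u b)).
Proof.
wlog ab : a b / (a < b)%N.
  move=> wlog_ab; case: (ltngtP a b) => [ab|ba|/val_inj->]; last by rewrite eqxx.
    exact: wlog_ab.
  by rewrite eq_sym dsym; apply: wlog_ab.
move=> _; rewrite /pair_prod (bigD1 a) //= (bigD1 b) //= -mulrA.
exact: ble_mulr.
Qed.

Lemma pair_prod_ge (k : nat) (u : 'I_k.+1 -> X) (g : B) :
  (forall a b : 'I_k.+1, (a < b)%N -> ble g (d (u a) (u b))) -> ble g (pair_prod u).
Proof.
move=> Hg; apply: (big_ind (ble g)) => [|x y|a _]; first exact: mulr1.
  exact: ble_meet.
apply: (big_ind (ble g)) => [|x y|b]; [exact: mulr1 | exact: ble_meet | exact: Hg].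
Qed.

End BooleanMetric.

Lemma pigeonhole_pair (T : finType) (A : {pred T}) (m : nat) (h : 'I_m -> T) :
  injective h -> (#|[predC A]|.+1 < m)%N ->
  exists a b, [/\ a != b, h a \in A & h b \in A].
Proof.
move=> hinj small; pose S := [set a | h a \in A].
have outside : (#|~: S| <= #|[predC A]|)%N.
  rewrite -(card_imset _ hinj); apply: subset_leq_card.
  by apply/subsetP => x /imsetP [a]; rewrite !inE => Ha ->.
have /card_gt1P [a [b [Sa Sb ab]]] : (1 < #|S|)%N.
  by have := cardsC S; rewrite card_ord; lia.
by move: Sa Sb; rewrite !inE; exists a, b.
Qed.

Section Base.
Variable B : comPzRingType.
Hypothesis Bbool : forall a : B, a * a = a.
Variables (X : Type) (d : X -> X -> B) (o : X) (n : nat) (xs : 'I_n -> X).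
Hypothesis Hm : is_bool_metric d.
Hypothesis Hb : is_base d o xs.

Let norm := bnorm d o.

Definition base_pt (x : option 'I_n) : X := if x is Some j then xs j else o.

Lemma base_pt_orth (x1 x2 : option 'I_n) :
  x1 != x2 -> d (base_pt x1) (base_pt x2) = bjoin (norm (base_pt x1)) (norm (base_pt x2)).
Proof.
have [[_ [_ orth]] _] := proj1 Hb.
case: x1 x2 => [s|] [t|] //= st; rewrite /norm /bnorm ?(dxx Hm) //.
- by apply: orth; apply: contraNneq st => ->.
- by rewrite bjoin0r (dsym Hm).
- by rewrite bjoinC bjoin0r.
Qed.

Lemma base_mono (i j : 'I_n) : (i <= j)%N -> ble (norm (xs j)) (norm (xs i)).
Proof. exact: (proj2 Hb). Qed.

Lemma cover_by_base (u : nat -> X) (N : nat) (e : B) :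
  (forall c : nat -> option 'I_n, e * \prod_(i < N) (1 - d (u i) (base_pt (c i))) = 0) ->
  e = 0.
Proof.
elim: N e => [|N IH] e He; first by have := He (fun _ => None); rewrite big_ord0 mulr1.
apply: IH => c; set e' := e * _.
have [m [ys [a [Hys [[_ sum_a] conv]]]]] := proj2 (proj1 Hb) (u N).
rewrite -(mulr1 e') -sum_a big_distrr /=; apply: big1 => l _.
have [cl Ecl] : exists cl, ys l = base_pt cl.
  by case: (Hys l) => [[j ->]|->]; [exists (Some j) | exists None].
pose c' i := if i == N then cl else c i.
have := He c'; rewrite big_ord_recr /= /c' eqxx -Ecl.
under eq_bigr => i _ do rewrite /= ltn_eqF //.
move=> E; have -> : a l = a l * (1 - d (u N) (ys l)) by rewrite mulrBr mulr1 conv subr0.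
by rewrite mulrCA /e' -mulrA E mulr0.
Qed.

(* The tail {0, x_k, ..., x_n} of R u {0} (in 0-based indices: t >= k-1). *)
Definition in_tail (k : nat) (x : option 'I_n) : bool :=
  if x is Some t then (k.-1 <= t)%N else true.

Lemma card_not_tail (k : nat) : (#|[predC in_tail k]| <= k.-1)%N.
Proof.
apply: leq_trans (_ : #|[set insub (val s) | s : 'I_k.-1]| <= _)%N.
  apply: subset_leq_card; apply/subsetP => -[t|] //; rewrite !inE -ltnNge => tk.
  by apply/imsetP; exists (Ordinal tk); rewrite //= valK.
by apply: leq_trans (leq_imset_card _ _) _; rewrite card_ord.
Qed.

(* g bounds the norms of the tail; e.g. g = |x_k|, or g = 0 when k > n. *)
Definition bounds_tail (k : nat) (g : B) : Prop :=
  forall s : 'I_n, (k.-1 <= s)%N -> ble (norm (xs s)) g.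

Lemma tail_dist_le (k : nat) (g : B) (x1 x2 : option 'I_n) :
  bounds_tail k g -> in_tail k x1 -> in_tail k x2 -> x1 != x2 ->
  ble (d (base_pt x1) (base_pt x2)) g.
Proof.
move=> Hg t1 t2 x12; rewrite base_pt_orth //.
have norm_le x : in_tail k x -> ble (norm (base_pt x)) g.
  by case: x => [s /Hg //|_]; rewrite /norm /bnorm (dxx Hm); exact: ble0.
by apply: bjoin_lub; apply: norm_le.
Qed.

Lemma pair_prod_upper (k : nat) (u : 'I_k.+1 -> X) (g : B) :
  (0 < k)%N -> bounds_tail k g -> ble (pair_prod d u) g.
Proof.
move=> k0 Hg; apply/ble_compl; set P := pair_prod d u.
apply: (@cover_by_base (fun t => u (inord t)) k.+1) => c.
set F := \prod_(i < k.+1) _.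
have HF (a : 'I_k.+1) : F * d (u a) (base_pt (c a)) = 0.
  by rewrite /F (bigD1 a) //= inord_val mulrAC mulrBl mul1r Bbool subrr mul0r.
have close (a b : 'I_k.+1) : a != b -> ble (d (base_pt (c a)) (base_pt (c b))) g ->
    P * (1 - g) * F = 0.
  move=> ab close_ab; rewrite mulrAC; apply/ble_compl.
  apply: (ble_trans _ close_ab); rewrite mulrC.
  apply: (ble_trans _ (dist_mask Bbool Hm (HF a) (HF b))); apply: ble_meet; first exact: ble_mulr.
  by rewrite mulrC; apply: (ble_trans _ (pair_prod_le Bbool Hm u ab)); apply: ble_mulr.
have [cinj|/injectivePn [a [b ab Eab]]] := altP (injectiveP (fun a : 'I_k.+1 => c a)).
  have few_out : (#|[predC in_tail k]|.+1 < k.+1)%N.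
    by have := card_not_tail k; lia.
  have [a [b [ab ta tb]]] := pigeonhole_pair cinj few_out.
  apply: (close a b ab); apply: tail_dist_le Hg ta tb _.
  by apply: contra_neq ab => /cinj.
apply: (close a b ab).
by rewrite Eab (dxx Hm); exact: ble0.
Qed.

(* Witness: |x_k| = P(0, x_1, ..., x_k) is a generator of I_k. *)
Lemma norm_in_Ik (i : 'I_n) : Ik_gen d i.+1 (norm (xs i)).
Proof.
pose code (j : 'I_i.+2) : option 'I_n := if val j is t.+1 then Some (insubd i t) else None.
have code_val (t : nat) : (t <= i)%N -> val (insubd i t) = t.
  by move=> ti; rewrite val_insubd (leq_ltn_trans ti (ltn_ord i)).
exists (fun j => base_pt (code j)); apply: esym; apply: ble_antisym.
  have -> : norm (xs i) = d (base_pt (code ord0)) (base_pt (code ord_max)).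
    by rewrite /code /= /norm /bnorm; congr (d o (xs _)); apply: val_inj; rewrite code_val.
  exact: pair_prod_le.
apply: pair_prod_ge => -[a ha] [[|t] hb] // ab.
have ti : (t <= i)%N by rewrite -ltnS.
have ne : code (Ordinal ha) != code (Ordinal hb).
  case: a ha ab => [|s] // ha /= ab; apply/eqP => -[] /(congr1 val).
  by rewrite !code_val //; lia.
rewrite base_pt_orth //; apply: (ble_trans _ (bjoin_ubr Bbool _ _)).
by apply: base_mono; rewrite /= code_val.
Qed.

End Base.

Lemma gen_ideal_sub (B : comPzRingType) (S : B -> Prop) (c : B) : S c -> in_gen_ideal S c.
Proof. by move=> Sc; exists 1%N, (fun _ => 1), (fun _ => c); rewrite big_ord1 mul1r. Qed.

Lemma gen_ideal0 (B : comPzRingType) (S : B -> Prop) : in_gen_ideal S 0.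
Proof. by exists 0%N, (fun _ => 0), (fun _ => 0); split; [by case | by rewrite big_ord0]. Qed.

Lemma generator_of_bound (B : comPzRingType) (S : B -> Prop) (g : B) :
  (forall c, S c -> ble c g) -> in_gen_ideal S g -> is_generator (in_gen_ideal S) g.
Proof.
move=> below [m [r [s [Ss Eg]]]] c; split.
  move=> [m' [r' [s' [Ss' ->]]]]; exists (\sum_(l < m') r' l * s' l).
  rewrite big_distrr; apply: eq_bigr => l _ /=.
  by rewrite mulrCA [g * _]mulrC (below _ (Ss' l)).
move=> [r0 ->]; exists m, (fun l => r0 * r l), s; split=> //.
by rewrite Eg mulrC big_distrr; apply: eq_bigr => l _ /=; rewrite mulrA.
Qed.

Theorem mainTheorem6 (B : comPzRingType) (Bbool : forall a : B, a * a = a)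
  (X : Type) (d : X -> X -> B) (o : X) (n : nat) (xs : 'I_n -> X) :
  is_bool_metric d -> is_convex d -> is_base d o xs ->
  forall k : nat, (0 < k)%N ->
    is_principal (in_gen_ideal (Ik_gen d k)) /\
    (forall i : 'I_n, k = i.+1 -> is_generator (in_gen_ideal (Ik_gen d k)) (bnorm d o (xs i))) /\
    ((n < k)%N -> is_generator (in_gen_ideal (Ik_gen d k)) 0).
Proof.
move=> Hm _ Hb k k0.
have gen g : bounds_tail d o xs k g -> in_gen_ideal (Ik_gen d k) g ->
    is_generator (in_gen_ideal (Ik_gen d k)) g.
  by move=> Hg; apply: generator_of_bound => c [u ->]; exact: (pair_prod_upper Bbool Hm Hb).
have norm_gen (i : 'I_n) : k = i.+1 -> is_generator (in_gen_ideal (Ik_gen d k)) (bnorm d o (xs i)).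
  move=> ki; apply: gen; first by move=> s; rewrite ki; exact: (base_mono Hb).
  by apply: gen_ideal_sub; rewrite ki; exact: (norm_in_Ik Bbool Hm Hb).
have zero_gen : (n < k)%N -> is_generator (in_gen_ideal (Ik_gen d k)) 0.
  move=> nk; apply: gen (gen_ideal0 _) => s sk.
  by have := ltn_ord s; lia.
split; last by split.
case: (leqP k n) => kn; last by exists 0; exact: zero_gen.
have k1n : (k.-1 < n)%N by rewrite prednK.
by exists (bnorm d o (xs (Ordinal k1n))); apply: norm_gen; rewrite /= prednK.
Qed.
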